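(* Let $G$ be a group equipped with a $\sigma$-field, acting measurably on a measurable sample space $\Omega_X$ and on a measurable action space $\Omega_A$, and let the parameter space be $\Omega_\Theta=G$, with $G$ acting on it by left multiplication $(g,\theta)\mapsto g\theta$. Let $\{P_X^\theta:\theta\in G\}$ be a family of probability measures on $\Omega_X$ that is group invariant: for all $g,\theta\in G$, the law of $gX$ when $X\sim P_X^\theta$ equals $P_X^{g\theta}$. Let $\gamma:G\times\Omega_A\to[0,\infty]$ be a measurable loss that is invariant, $\gamma(g\theta,ga)=\gamma(\theta,a)$ for all $g,\theta\in G$, $a\in\Omega_A$, and let $\delta:\Omega_X\to\Omega_A$ be a measurable equivariant rule, $\delta(gx)=g\delta(x)$ for all $g\in G$, $x\in\Omega_X$. Let $U$ be a random element of $\Omega_X$ with law $Q=P_X^e$ ($e$ the identity of $G$). Let $\phi:\Omega_X\to\Omega_Y$ be a measurable maximal invariant (i.e. $\phi(gx)=\phi(x)$ for all $g,x$, and $\phi(x)=\phi(u)$ implies $x\in Gu$), and suppose there is a measurable selection $s:\{(x,u):\phi(x)=\phi(u)\}\to G$ with $x=s(x,u)\,u$ for all such $(x,u)$. For $x\in\Omega_X$ define the random element $\Theta^x=s(x,U)$ on the event $\{\phi(U)=\phi(x)\}$; the conditional law of $\Theta^x$ given $\phi(U)=\phi(x)$ is called a fiducial distribution. Let $(Q^y)_y$ be a regular conditional distribution of $U$ given $\phi(U)=y$ with $Q^y$ concentrated on $\phi^{-1}(y)$ for $Q_Y$-a.e. $y$, where $Q_Y$ is the law of $\phi(U)$. Then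 for every $\theta\in G$ the risk satisfies $$\rho(\theta):=\int \gamma(\theta,\delta(x))\,P_X^\theta(dx)=\int\Big[\int\gamma(e,\delta(u))\,Q^y(du)\Big]\,Q_Y(dy),$$ so in particular $\rho(\theta)$ does not depend on $\theta$; and for $Q_Y$-a.e. $y$ and every $x\in\Omega_X$ with $\phi(x)=y$, $$\int\gamma(e,\delta(u))\,Q^y(du)=\int\gamma\big(s(x,u),\delta(x)\big)\,Q^y(du)=\mathbb{E}\big[\gamma(\Theta^x,\delta(x))\,\big|\,\phi(U)=y\big].$$ That is, the risk of any equivariant rule is determined by the fiducial distribution (for any choice of measurable selection $s$).
   Context: A statistical decision problem: loss $\gamma(\theta,a)$ of action $a$ under parameter $\theta$, risk $\rho(\theta)=\mathbb{E}^\theta\gamma(\theta,\delta(X))$ of a rule $\delta$. An orbit of $x$ is $Gx=\{gx:g\in G\}$. The model parameter space $G$ with left multiplication is a principal homogeneous space (free and transitive action) for $G$. *)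

From HB Require Import structures.
From mathcomp Require Import all_boot all_order all_algebra.
From mathcomp Require Import all_classical all_reals all_analysis.
From mathcomp Require Import measurable_realfun.
Set Implicit Arguments. Unset Strict Implicit. Unset Printing Implicit Defensive.

(* Since P_theta is the image of P_e under x |-> theta x, the risk at theta is
   the integral of gamma(theta, delta(theta u)) = gamma(theta, theta delta(u))
   = gamma(e, delta(u)) against P_e; disintegrating P_e along phi gives the
   first identity, independent of theta.  For the second, Q^y lives on the
   orbit phi^-1(y), and for u there, x = s(x,u) u gives
   gamma(s(x,u), delta(x)) = gamma(s(x,u), s(x,u) delta(u)) = gamma(e, delta(u)),
   so the two inner integrands agree Q^y-almost everywhere. *)
From HB Require Import structures.
From mathcomp Require Import all_boot all_order all_algebra.
From mathcomp Require Import all_classical all_reals all_analysis.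
From mathcomp Require Import measurable_realfun.
Import Order.TTheory GRing.Theory Num.Theory.
Local Open Scope classical_set_scope.
Local Open Scope ring_scope.
Import HBNNSimple.

Section group_identities.
Context {G : Type} {mul : G -> G -> G} {e : G} {inv : G -> G}.
Hypothesis mulA : forall g h k, mul g (mul h k) = mul (mul g h) k.
Hypothesis mul1g : forall g, mul e g = g.
Hypothesis mulVg : forall g, mul (inv g) g = e.

Lemma mulgV g : mul g (inv g) = e.
Proof.
have mulVV : mul (inv (inv g)) (inv g) = e by rewrite mulVg.
by rewrite -[LHS]mul1g -mulVV -mulA (mulA (inv g)) mulVg mul1g mulVV.
Qed.

Lemma mulg1 g : mul g e = g.
Proof. by rewrite -(mulVg g) mulA mulgV mul1g. Qed.

Lemma invariant_loss_actE {A L : Type} {actA : G -> A -> A}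
    {gamma : G -> A -> L} :
  (forall g theta a, gamma (mul g theta) (actA g a) = gamma theta a) ->
  forall g a, gamma g (actA g a) = gamma e a.
Proof. by move=> gamma_inv g a; rewrite -{1}(mulg1 g) gamma_inv. Qed.

End group_identities.

Section integral_null_set.
Context d (T : measurableType d) (R : realType).
Variable mu : {measure set T -> \bar R}.
Local Open Scope ereal_scope.

(* No measurability of [f] is assumed, since [u |-> gamma (s x u) (delta x)]
   need not be measurable ([s] is only measurable on the trace sigma-field).
   The integral of a nonnegative function is a supremum over the simple
   functions below it, and cutting those down to [~` N] keeps their integrals. *)
Lemma ge0_integral_setC_null {f : T -> \bar R} {N : set T} :
  measurable N -> mu N = 0 -> (forall x, 0 <= f x) ->
  \int[mu]_x f x = \int[mu]_(x in ~` N) f x.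
Proof.
move=> mN N0 f0.
rewrite ge0_integralTE // ge0_integralE; last by move=> x _; exact: f0.
apply/eqP; rewrite eq_le; apply/andP; split; last first.
  apply: ereal_sup_le => _ [h hf <-]; exists h => // x.
  by apply: le_trans (hf x) _; rewrite patchE; case: ifP => _ //; exact: f0.
apply: ge_ereal_sup => _ [h hf <-].
have mCN : measurable (~` N) by exact: measurableC.
pose hCN := mul_nnsfun h (indic_nnsfun R mCN).
apply: ereal_sup_ubound; exists hCN.
  move=> x /=; rewrite patchE /= mindicE /=; case: ifPn => xN.
    by rewrite mulr1; exact: hf.
  by rewrite mulr0.
have mEFin (k : {nnsfun T >-> R}) : measurable_fun [set: T] (EFin \o k).
  by apply/measurable_EFinP; exact: measurable_funP.
rewrite -!integralT_nnsfun.
rewrite (ge0_negligible_integral _ _ (mEFin _) _ N0) //; last first.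
  by move=> x _; rewrite lee_fin.
rewrite [RHS](ge0_negligible_integral _ _ (mEFin _) _ N0) //; last first.
  by move=> x _; rewrite lee_fin.
apply: eq_integral => x; rewrite inE => -[_ xN] /=.
by rewrite mindicE /= mem_set // mulr1.
Qed.

Lemma ge0_ae_eq_integralT (f g : T -> \bar R) :
  (forall x, 0 <= f x) -> (forall x, 0 <= g x) ->
  {ae mu, forall x, f x = g x} -> \int[mu]_x f x = \int[mu]_x g x.
Proof.
move=> f0 g0 [N [mN N0 fgN]].
rewrite (ge0_integral_setC_null mN N0 f0) (ge0_integral_setC_null mN N0 g0).
apply: eq_integral => x; rewrite inE => xN.
by apply: contrapT => fgx; apply: xN; exact: fgN.
Qed.

End integral_null_set.

Section integral_mixture.
Context (R : realType) (dX dY : measure_display)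
  (X : measurableType dX) (Y : measurableType dY)
  (QY : probability Y R) (Qc : Y -> probability X R).
Hypothesis mQc : forall B : set X, measurable B ->
  measurable_fun [set: Y] (fun y => Qc y B).

(* The mixture of the [Qc y] by [QY] is the kernel composition of the constant
   kernel [tt |-> QY] with [(tt, y) |-> Qc y]. *)
Let mixing (_ : unit) : {measure set Y -> \bar R} := QY.
Let mixed (p : unit * Y) : {measure set X -> \bar R} := Qc p.2.

Let measurable_mixing U : measurable U ->
  measurable_fun [set: unit] (mixing ^~ U).
Proof. by move=> _; exact: measurable_cst. Qed.
HB.instance Definition _ := @isKernel.Build _ _ _ _ R mixing measurable_mixing.
Let mixing_setT x : mixing x [set: Y] = 1%E.
Proof. exact: probability_setT. Qed.
HB.instance Definition _ := @Kernel_isProbability.Build _ _ _ _ R mixing mixing_setT.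

Let measurable_mixed U : measurable U ->
  measurable_fun [set: unit * Y] (mixed ^~ U).
Proof. by move=> mU; exact: measurableT_comp (mQc _ mU) measurable_snd. Qed.
HB.instance Definition _ := @isKernel.Build _ _ _ _ R mixed measurable_mixed.
Let mixed_setT x : mixed x [set: X] = 1%E.
Proof. exact: probability_setT. Qed.
HB.instance Definition _ := @Kernel_isProbability.Build _ _ _ _ R mixed mixed_setT.

Lemma ge0_integral_mixture (mu : {measure set X -> \bar R}) (f : X -> \bar R) :
  (forall B, measurable B -> mu B = \int[QY]_y Qc y B)%E ->
  (forall x, 0 <= f x)%E -> measurable_fun [set: X] f ->
  (\int[mu]_x f x = \int[QY]_y \int[Qc y]_x f x)%E.
Proof.
move=> muE f0 mf.
rewrite (eq_measure_integral (kcomp mixing mixed tt)); last first.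
  by move=> B mB _; rewrite muE.
exact: integral_kcomp.
Qed.

End integral_mixture.

Lemma ge0_integral_image_measure {d d'} {T : measurableType d}
    {U : measurableType d'} {R : realType}
    {mu : {measure set T -> \bar R}} {nu : {measure set U -> \bar R}}
    {h : T -> U} {f : U -> \bar R} :
  measurable_fun [set: T] h ->
  (forall B, measurable B -> nu B = mu (h @^-1` B)) ->
  (forall y, 0 <= f y)%E -> measurable_fun [set: U] f ->
  (\int[nu]_y f y = \int[mu]_x f (h x))%E.
Proof.
move=> mh nuE f0 mf.
rewrite (eq_measure_integral (pushforward mu h)); last first.
  by move=> B mB _; rewrite nuE.
by rewrite (ge0_integral_pushforward mh) ?preimage_setT // => y _; exact: f0.
Qed.

Theorem theorem1 (R : realType)
  (dG dX dA dY : measure_display)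
  (G : measurableType dG) (X : measurableType dX)
  (A : measurableType dA) (Y : measurableType dY)
  (mul : G -> G -> G) (e : G) (inv : G -> G)
  (mulA : forall g h k, mul g (mul h k) = mul (mul g h) k)
  (mul1g : forall g, mul e g = g)
  (mulVg : forall g, mul (inv g) g = e)
  (actX : G -> X -> X) (actA : G -> A -> A)
  (actX1 : forall x, actX e x = x)
  (actXM : forall g h x, actX (mul g h) x = actX g (actX h x))
  (actA1 : forall a, actA e a = a)
  (actAM : forall g h a, actA (mul g h) a = actA g (actA h a))
  (mactX : measurable_fun [set: G * X] (fun p => actX p.1 p.2))
  (mactA : measurable_fun [set: G * A] (fun p => actA p.1 p.2))
  (P : G -> probability X R)
  (Pinv : forall g theta (B : set X), measurable B ->
     P theta (actX g @^-1` B) = P (mul g theta) B)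
  (gamma : G -> A -> \bar R)
  (gamma_ge0 : forall theta a, (0 <= gamma theta a)%E)
  (mgamma : measurable_fun [set: G * A] (fun p => gamma p.1 p.2))
  (gamma_inv : forall g theta a, gamma (mul g theta) (actA g a) = gamma theta a)
  (delta : X -> A)
  (mdelta : measurable_fun [set: X] delta)
  (delta_eqv : forall g x, delta (actX g x) = actA g (delta x))
  (phi : X -> Y)
  (mphi : measurable_fun [set: X] phi)
  (phi_inv : forall g x, phi (actX g x) = phi x)
  (phi_max : forall x u, phi x = phi u -> exists g, x = actX g u)
  (s : X -> X -> G)
  (ms : forall B : set G, measurable B ->
     exists M : set (X * X), measurable M /\
       [set p : X * X | phi p.1 = phi p.2] `&` (fun p => s p.1 p.2) @^-1` B
       = [set p : X * X | phi p.1 = phi p.2] `&` M)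
  (s_spec : forall x u, phi x = phi u -> x = actX (s x u) u)
  (QY : probability Y R)
  (QY_law : forall B : set Y, measurable B -> QY B = P e (phi @^-1` B))
  (Qc : Y -> probability X R)
  (mQc : forall B : set X, measurable B -> measurable_fun [set: Y] (fun y => Qc y B))
  (Qc_disint : forall (B : set X) (C : set Y), measurable B -> measurable C ->
     (P e (B `&` phi @^-1` C) = \int[QY]_(y in C) Qc y B)%E)
  (Qc_conc : {ae QY, forall y, (Qc y).-negligible (~` (phi @^-1` [set y]))}) :
  (forall theta : G,
     (\int[P theta]_x gamma theta (delta x)
      = \int[QY]_y (\int[Qc y]_u gamma e (delta u)))%E) /\
  {ae QY, forall y, forall x, phi x = y ->
     (\int[Qc y]_u gamma e (delta u) = \int[Qc y]_u gamma (s x u) (delta x))%E}.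
Proof.
have gammaE := invariant_loss_actE mulA mul1g mulVg gamma_inv.
have mgamma_at theta : measurable_fun [set: A] (gamma theta).
  exact: measurable_fun_pair2 mgamma.
split=> [theta|].
  have P_image B : measurable B -> P theta B = P e (actX theta @^-1` B).
    by move=> mB; rewrite Pinv // (mulg1 mulA mul1g mulVg).
  rewrite (ge0_integral_image_measure (measurable_fun_pair2 theta mactX) P_image)
    //; last exact: measurableT_comp (mgamma_at theta) mdelta.
  under eq_integral do rewrite delta_eqv gammaE.
  apply: ge0_integral_mixture => //; last exact: measurableT_comp (mgamma_at e) mdelta.
  by move=> B mB; rewrite -Qc_disint // preimage_setT setIT.
apply: filterS Qc_conc => y Qc_orbit x phixy.
have Qc_phiE : {ae Qc y, forall u, phi u = y} := Qc_orbit.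
apply: ge0_ae_eq_integralT => //; apply: filterS Qc_phiE => u phiuy.
have xE : x = actX (s x u) u by apply: s_spec; rewrite phixy phiuy.
have -> : delta x = actA (s x u) (delta u) by rewrite {1}xE delta_eqv.
by rewrite gammaE.
Qed.
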